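(* Let $\mathcal H$ be a complex Hilbert space, $T\in\boldsymbol B(\mathcal H)$ a quasinormal operator that is not normal, and $n$ an integer greater than $1$. If there exists a quasinormal $Q\in\boldsymbol B(\mathcal H)$ with $Q^n=T$, then there exists $R\in\boldsymbol B(\mathcal H)$ which is not quasinormal and satisfies $R^n=T$.
   Context: A bounded operator $T$ is normal if $T^*T=TT^*$ and quasinormal if $T(T^*T)=(T^*T)T$. *)

From HB Require Import structures.
From mathcomp Require Import all_boot all_order all_algebra.
From mathcomp Require Import reals complex.
Set Implicit Arguments. Unset Strict Implicit. Unset Printing Implicit Defensive.
Import Order.TTheory GRing.Theory Num.Theory.
Local Open Scope ring_scope.

Section Hilbert.
Variables (R : realType) (V : lmodType R[i]) (ip : V -> V -> R[i]).

Definition hnorm (x : V) : R[i] := sqrtC (ip x x).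

Definition is_hilbert : Prop :=
  [/\ (forall (a : R[i]) (x y z : V), ip (a *: x + y) z = a * ip x z + ip y z),
      (forall x y : V, ip y x = (ip x y)^*),
      (forall x : V, 0 <= ip x x),
      (forall x : V, ip x x = 0 -> x = 0) &
      (forall u : nat -> V,
          (forall e : R[i], 0 < e -> exists N : nat, forall m n : nat,
               (N <= m)%N -> (N <= n)%N -> hnorm (u m - u n) < e) ->
          exists l : V, forall e : R[i], 0 < e -> exists N : nat,
               forall n : nat, (N <= n)%N -> hnorm (u n - l) < e)].

Definition bounded_op (T : V -> V) : Prop :=
  (forall (a : R[i]) (x y : V), T (a *: x + y) = a *: T x + T y) /\
  exists M : R[i], 0 <= M /\ forall x : V, hnorm (T x) <= M * hnorm x.

Definition is_adjoint (T S : V -> V) : Prop :=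
  forall x y : V, ip (T x) y = ip x (S y).

Definition normal_op (T : V -> V) : Prop :=
  exists S, is_adjoint T S /\ forall x, S (T x) = T (S x).

Definition quasinormal_op (T : V -> V) : Prop :=
  exists S, is_adjoint T S /\ forall x, T (S (T x)) = S (T (T x)).

End Hilbert.

(* Let K = ker Q* and let Z be the set of vectors Q^j u with u in K and n not
   dividing j.  Since Q*Q maps K into K and Q* Q^(j+1) u = Q^j (Q*Q u) on K, both
   T = Q^n and T* = Q*^n map W = Z^perp into itself, so the orthogonal projection
   Pi onto W (which exists by completeness) commutes with T.  Then D = I + Pi is
   invertible with inverse I - Pi/2, and R = D Q D^-1 is bounded with
   R^n = D T D^-1 = T.  As T is not normal, neither is Q, which yields m in K with
   Q*Q m <> 0; evaluating the quasinormality identity of R at m against Q m gives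
   |Q*Q m|^2 / 8 = |D Q^2 m|^2 / 2 >= |Q*Q m|^2 / 2, a contradiction. *)

From HB Require Import structures.
From mathcomp Require Import all_boot all_order all_algebra.
From mathcomp Require Import reals complex boolp classical_sets.
From mathcomp Require Import ring lra.
Import Order.TTheory GRing.Theory Num.Theory.
Local Open Scope ring_scope.
Set Implicit Arguments. Unset Strict Implicit. Unset Printing Implicit Defensive.

Section LinearMaps.
Variables (F : pzRingType) (V : lmodType F) (f : V -> V).
Hypothesis f_linear : linear f.

Lemma lin0 : f 0 = 0.
Proof.
have := f_linear 1 0 0; rewrite !scale1r addr0 => h.
by apply/esym/(@addrI _ (f 0)); rewrite addr0 {1}h.
Qed.

Lemma linD x y : f (x + y) = f x + f y.
Proof. by have := f_linear 1 x y; rewrite !scale1r. Qed.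

Lemma linZ a x : f (a *: x) = a *: f x.
Proof. by rewrite -[a *: x]addr0 f_linear lin0 addr0. Qed.

Lemma linB x y : f (x - y) = f x - f y.
Proof. by rewrite linD -scaleN1r linZ scaleN1r. Qed.

Lemma iter_linear k : linear (iter k f).
Proof. by elim: k => [//|k IH] a x y /=; rewrite IH f_linear. Qed.

End LinearMaps.

Lemma iter_comm (T : Type) (f g : T -> T) : (forall x, f (g x) = g (f x)) ->
  forall a b x, iter a f (iter b g x) = iter b g (iter a f x).
Proof.
move=> h; have h1 b x : f (iter b g x) = iter b g (f x).
  by elim: b x => [//|b IH] x /=; rewrite h IH.
by elim=> [//|a IH] b x /=; rewrite IH h1.
Qed.

Section InnerProductSpace.
Variables (R : realType) (V : lmodType R[i]) (ip : V -> V -> R[i]).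
Hypothesis ip_linear :
  forall (a : R[i]) (x y z : V), ip (a *: x + y) z = a * ip x z + ip y z.
Hypothesis ip_conj : forall x y : V, ip y x = (ip x y)^*.
Hypothesis ip_ge0 : forall x : V, 0 <= ip x x.
Hypothesis ip_definite : forall x : V, ip x x = 0 -> x = 0.

Local Notation toC := (real_complex R).

Lemma ip0l z : ip 0 z = 0.
Proof.
have := ip_linear 1 0 0 z; rewrite scale1r addr0 mul1r => h.
by apply/esym/(@addrI _ (ip 0 z)); rewrite addr0 {1}h.
Qed.

Lemma ipDl x y z : ip (x + y) z = ip x z + ip y z.
Proof. by have := ip_linear 1 x y z; rewrite scale1r mul1r. Qed.

Lemma ipZl a x z : ip (a *: x) z = a * ip x z.
Proof. by have := ip_linear a x 0 z; rewrite addr0 ip0l addr0. Qed.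

Lemma ipBl x y z : ip (x - y) z = ip x z - ip y z.
Proof. by rewrite ipDl -scaleN1r ipZl mulN1r. Qed.

Lemma ip0r z : ip z 0 = 0.
Proof. by rewrite ip_conj ip0l rmorph0. Qed.

Lemma ipDr x y z : ip z (x + y) = ip z x + ip z y.
Proof. by rewrite ip_conj ipDl rmorphD /= -!ip_conj. Qed.

Lemma ipZr a x z : ip z (a *: x) = a^* * ip z x.
Proof. by rewrite ip_conj ipZl rmorphM /= -ip_conj. Qed.

Lemma ipBr x y z : ip z (x - y) = ip z x - ip z y.
Proof. by rewrite ipDr -scaleN1r ipZr rmorphN1 mulN1r. Qed.

Lemma ip_ext u v : (forall w, ip w u = ip w v) -> u = v.
Proof.
move=> h; apply/eqP; rewrite -subr_eq0; apply/eqP/ip_definite.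
by rewrite ipBr h subrr.
Qed.

Definition sqn (x : V) : R := complex.Re (ip x x).

Lemma ip_sqn x : ip x x = toC (sqn x).
Proof.
rewrite /sqn; have := ip_ge0 x; case: (ip x x) => a b.
by rewrite lecE /= => /andP[/eqP -> _].
Qed.

Lemma sqn_ge0 x : 0 <= sqn x.
Proof. by have := ip_ge0 x; rewrite ip_sqn lecR. Qed.

Lemma sqn_eq0 x : sqn x = 0 -> x = 0.
Proof. by move=> h; apply: ip_definite; rewrite ip_sqn h. Qed.

Lemma sqn_add x y : sqn (x + y) = sqn x + sqn y + 2 * complex.Re (ip x y).
Proof.
rewrite {1}/sqn ipDl !ipDr (ip_conj x y) -/(sqn x) -/(sqn y) ip_sqn (ip_sqn y).
by case: (ip x y) => a b /=; ring.
Qed.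

Lemma sqn_scale a x :
  sqn (a *: x) = (complex.Re a ^+ 2 + complex.Im a ^+ 2) * sqn x.
Proof. by rewrite {1}/sqn ipZl ipZr ip_sqn; case: a => a1 a2 /=; ring. Qed.

Lemma sqn_sub_scale u t z :
  sqn (u - t *: z) = sqn u + (complex.Re t ^+ 2 + complex.Im t ^+ 2) * sqn z
     - 2 * (complex.Re t * complex.Re (ip u z) + complex.Im t * complex.Im (ip u z)).
Proof.
rewrite sqn_add -scaleNr sqn_scale ipZr.
by case: t => a b; case: (ip u z) => c d /=; ring.
Qed.

Lemma sqn_opp x : sqn (- x) = sqn x.
Proof. by rewrite -scaleN1r sqn_scale /=; ring. Qed.

Lemma sqn_orth a b : ip a b = 0 -> sqn (a + b) = sqn a + sqn b.
Proof. by move=> h; rewrite sqn_add h /= mulr0 addr0. Qed.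

Lemma parallelogram a b : sqn (a + b) + sqn (a - b) = 2 * sqn a + 2 * sqn b.
Proof.
rewrite !sqn_add sqn_opp -scaleN1r ipZr.
by case: (ip a b) => c d /=; ring.
Qed.

Lemma cauchy_schwarz u z :
  complex.Re (ip u z) ^+ 2 + complex.Im (ip u z) ^+ 2 <= sqn u * sqn z.
Proof.
have [z0|nz0] := eqVneq (sqn z) 0.
  by rewrite z0 mulr0 (sqn_eq0 z0) ip0r /=; lra.
have nzp : 0 < sqn z by rewrite lt_def nz0 sqn_ge0.
set cr := complex.Re (ip u z); set ci := complex.Im (ip u z).
have := sqn_ge0 (u - (Complex (cr / sqn z) (ci / sqn z)) *: z).
rewrite sqn_sub_scale /= -/cr -/ci => h.
have -> : cr ^+ 2 + ci ^+ 2 = (cr ^+ 2 + ci ^+ 2) / sqn z * sqn z.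
  by rewrite divfK.
rewrite ler_wpM2r ?sqn_ge0 //.
have e : (cr / sqn z) ^+ 2 + (ci / sqn z) ^+ 2 = (cr ^+ 2 + ci ^+ 2) / sqn z / sqn z.
  by field.
have e2 : cr / sqn z * cr + ci / sqn z * ci = (cr ^+ 2 + ci ^+ 2) / sqn z.
  by field.
rewrite e e2 divfK // in h.
move: h; set s := _ / sqn z; lra.
Qed.

(* Weighted triangle inequality for the squared norm, used to pass the
   minimising property to the limit of a minimising sequence. *)
Lemma sqn_add_le (t : R) a b : 0 < t ->
  sqn (a + b) <= (1 + t^-1) * sqn a + (1 + t) * sqn b.
Proof.
move=> t0; have := sqn_ge0 (a - toC t *: b).
rewrite sqn_sub_scale sqn_add /=.
set c := complex.Re (ip a b) => h.
have hc : 2 * c <= t^-1 * sqn a + t * sqn b.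
  rewrite -(ler_pM2l t0) mulrDr mulVKf ?gt_eqF //; nra.
lra.
Qed.

Lemma toC_Re (e : R[i]) : 0 <= e -> e = toC (complex.Re e).
Proof. by case: e => a b; rewrite lecE /= => /andP[/eqP -> _]. Qed.

Lemma hnorm_lt x e : 0 < e -> (hnorm ip x < e) = (sqn x < complex.Re e ^+ 2).
Proof.
move=> e0; have e0' : 0 <= e := ltW e0.
rewrite /hnorm -{1}(sqrCK e0') ltr_sqrtC ?nnegrE ?ip_ge0 ?exprn_ge0 //.
by rewrite ip_sqn {1}(toC_Re e0') -rmorphXn ltcR.
Qed.

Lemma hnorm_le x y M : 0 <= M ->
  (hnorm ip y <= M * hnorm ip x) = (sqn y <= complex.Re M ^+ 2 * sqn x).
Proof.
move=> M0; rewrite /hnorm -{1}(sqrCK M0) -sqrtCM ?nnegrE ?ip_ge0 ?exprn_ge0 //.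
rewrite ler_sqrtC ?nnegrE ?ip_ge0 ?mulr_ge0 ?exprn_ge0 //.
by rewrite !ip_sqn [in LHS](toC_Re M0) -rmorphXn -rmorphM lecR.
Qed.

Lemma complex_eq0 (c : R[i]) : complex.Re c ^+ 2 + complex.Im c ^+ 2 <= 0 -> c = 0.
Proof.
case: c => a b /= h.
have /eqP : a ^+ 2 + b ^+ 2 = 0 by apply/le_anti; rewrite h addr_ge0 ?sqr_ge0.
by rewrite paddr_eq0 ?sqr_ge0 // !expf_eq0 /= => /andP[/eqP -> /eqP ->].
Qed.

Definition cauchy_seq (u : nat -> V) := forall eps : R, 0 < eps ->
  exists N0 : nat, forall m k : nat, (N0 <= m)%N -> (N0 <= k)%N -> sqn (u m - u k) < eps.

Definition converges_to (u : nat -> V) (l : V) := forall eps : R, 0 < eps ->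
  exists N0 : nat, forall k : nat, (N0 <= k)%N -> sqn (u k - l) < eps.

Lemma inv_succ_small (eps : R) : 0 < eps ->
  exists N0 : nat, forall m : nat, (N0 <= m)%N -> m.+1%:R^-1 < eps.
Proof.
move=> e0; exists (Num.Def.archi_bound eps^-1) => m hm.
have h1 : eps^-1 < (Num.Def.archi_bound eps^-1)%:R.
  by apply: archi_boundP; rewrite invr_ge0 ltW.
have h2 : eps^-1 < m.+1%:R by apply: (lt_le_trans h1); rewrite ler_nat; exact: leqW.
by rewrite invf_plt ?posrE ?ltr0Sn.
Qed.

Definition orth (A : V -> Prop) (w : V) := forall z, A z -> ip w z = 0.

Lemma orth_lin A a u v : orth A u -> orth A v -> orth A (a *: u + v).
Proof. by move=> hu hv z hz; rewrite ip_linear hu ?hv // mulr0 addr0. Qed.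

Lemma orth0 A : orth A 0.
Proof. by move=> z _; rewrite ip0l. Qed.

Lemma orth_closed A (w : nat -> V) l :
  (forall k, orth A (w k)) -> converges_to w l -> orth A l.
Proof.
move=> wA hl z hz; apply: complex_eq0; rewrite leNgt; apply/negP => qp.
set q := _ + _ in qp.
have nz1 : 0 < sqn z + 1 by have := sqn_ge0 z; lra.
have [N0 hN] := hl _ (divr_gt0 qp nz1).
have := cauchy_schwarz (l - w N0) z.
rewrite ipBl (wA N0 z hz) subr0 -/q -sqn_opp opprB => cs.
have : sqn (w N0 - l) * sqn z <= q / (sqn z + 1) * sqn z.
  by rewrite ler_wpM2r ?sqn_ge0 // ltW ?hN.
have : q / (sqn z + 1) * sqn z < q.
  by rewrite mulrAC ltr_pdivrMr //; have := sqn_ge0 z; nra.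
lra.
Qed.

Section Projection.
Variables (A : V -> Prop) (x : V).

Let dist_set : set R := [set r | exists w, orth A w /\ r = sqn (x - w)]%classic.
Let dist : R := inf dist_set.

Let dist_has_inf : has_inf dist_set.
Proof.
split; first by exists (sqn (x - 0)), 0; split; [exact: orth0|].
by exists 0 => r [w [_ ->]]; exact: sqn_ge0.
Qed.

Let dist_le w : orth A w -> dist <= sqn (x - w).
Proof. by move=> hw; apply: ge_inf; [exact: dist_has_inf.2 | exists w]. Qed.

Let dist_ge0 : 0 <= dist.
Proof.
apply: lb_le_inf; first exact: dist_has_inf.1.
by move=> r [w [_ ->]]; exact: sqn_ge0.
Qed.

Lemma minimizing_seq :
  exists w : nat -> V, forall k, orth A (w k) /\ sqn (x - w k) < dist + k.+1%:R^-1.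
Proof.
have hk k : exists w, orth A w /\ sqn (x - w) < dist + k.+1%:R^-1.
  have k0 : 0 < k.+1%:R^-1 :> R by rewrite invr_gt0 ltr0Sn.
  by have [r [w [hw ->]] hr] := inf_adherent k0 dist_has_inf; exists w.
by have [w hw] := boolp.choice hk; exists w.
Qed.

(* Two almost-minimisers are close to each other (parallelogram law). *)
Lemma minimizers_close w1 w2 e1 e2 : orth A w1 -> orth A w2 ->
  sqn (x - w1) < dist + e1 -> sqn (x - w2) < dist + e2 ->
  sqn (w1 - w2) <= 2 * e1 + 2 * e2.
Proof.
move=> h1 h2 hd1 hd2.
have := parallelogram (x - w2) (x - w1).
have -> : x - w2 - (x - w1) = w1 - w2 by rewrite opprB addrC addrA subrK.
have -> : x - w2 + (x - w1) = (2 : R[i]) *: (x - 2^-1 *: (w1 + w2)).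
  rewrite scalerBr scalerA mulfV ?pnatr_eq0 // scale1r scaler_nat mulr2n.
  by rewrite opprD addrACA (addrC (- w2)).
rewrite sqn_scale /=.
have := dist_le (orth_lin 2^-1 (orth_lin 1 h1 h2) (@orth0 A)).
rewrite scale1r addr0; lra.
Qed.

Lemma limit_minimizes (w : nat -> V) l :
  (forall k, sqn (x - w k) < dist + k.+1%:R^-1) -> converges_to w l ->
  sqn (x - l) <= dist.
Proof.
move=> hw hl; apply/ler_addgt0Pr => e e0.
have d1 : 0 < dist + 1 by have := dist_ge0; lra.
set t := e / (3 * (dist + 1)).
have t0 : 0 < t by rewrite divr_gt0 // mulr_gt0.
have td : t * dist <= e / 3.
  by rewrite /t mulrAC ler_pdivrMr ?mulr_gt0 // mulrAC -mulrA ler_pM2l //; lra.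
set h := e / (3 * (1 + t)); set del := e / (3 * (1 + t^-1)).
have h0 : 0 < h by rewrite divr_gt0 // mulr_gt0 //; lra.
have del0 : 0 < del.
  by rewrite divr_gt0 // mulr_gt0 // addr_gt0 ?invr_gt0.
have [N1 hN1] := inv_succ_small h0; have [N2 hN2] := hl _ del0.
pose k := maxn N1 N2.
have hA : sqn (x - w k) <= dist + h.
  by apply/ltW/(lt_trans (hw k)); rewrite ltrD2l hN1 // leq_maxl.
have hB : sqn (w k - l) <= del by apply/ltW/hN2; rewrite leq_maxr.
have := sqn_add_le (w k - l) (x - w k) t0.
rewrite addrC addrA subrK => hsum.
have eh : (1 + t) * h = e / 3 by rewrite /h; field; lra.
have edel : (1 + t^-1) * del = e / 3.
  by rewrite /del; field; apply/andP; split; rewrite ?gt_eqF //; lra.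
have : (1 + t^-1) * sqn (w k - l) <= e / 3.
  by rewrite -edel ler_wpM2l // addr_ge0 ?invr_ge0 ?ltW.
have : (1 + t) * sqn (x - w k) <= (1 + t) * dist + e / 3.
  by rewrite -eh -mulrDr ler_wpM2l //; lra.
lra.
Qed.

Lemma minimizer_orth l : orth A l -> sqn (x - l) <= dist ->
  forall w0, orth A w0 -> ip (x - l) w0 = 0.
Proof.
move=> hl dl w0 hw0; set c := ip (x - l) w0.
set s := (sqn w0 + 1)^-1.
have s0 : 0 < s by rewrite invr_gt0; have := sqn_ge0 w0; lra.
have := dist_le (orth_lin (toC s * c) hw0 hl).
rewrite [_ *: w0 + l]addrC opprD addrA sqn_sub_scale -/c.
have -> : complex.Re (toC s * c) = s * complex.Re c by case: (c) => a b /=; ring.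
have -> : complex.Im (toC s * c) = s * complex.Im c by case: (c) => a b /=; ring.
move=> hd; apply: complex_eq0.
set q := _ + _.
have q0 : 0 <= q by rewrite addr_ge0 ?sqr_ge0.
have sN : s * sqn w0 < 1 by rewrite mulrC ltr_pdivrMr; have := sqn_ge0 w0; lra.
have key : 0 <= s * (s * q * sqn w0 - 2 * q) by move: hd dl; rewrite /q; nra.
rewrite pmulr_rge0 // in key; nra.
Qed.

End Projection.

Hypothesis ip_complete : forall u : nat -> V,
  (forall e : R[i], 0 < e -> exists N0 : nat, forall m n : nat,
       (N0 <= m)%N -> (N0 <= n)%N -> hnorm ip (u m - u n) < e) ->
  exists l : V, forall e : R[i], 0 < e -> exists N0 : nat,
       forall n : nat, (N0 <= n)%N -> hnorm ip (u n - l) < e.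

Lemma cauchy_converges (u : nat -> V) : cauchy_seq u -> exists l, converges_to u l.
Proof.
move=> hc; have [l hl] : exists l : V, forall e : R[i], 0 < e -> exists N0 : nat,
    forall n : nat, (N0 <= n)%N -> hnorm ip (u n - l) < e.
  apply: ip_complete => e e0.
  have er : 0 < complex.Re e ^+ 2 by rewrite exprn_gt0 // -ltcR -toC_Re ?ltW.
  have [N0 hN] := hc _ er; exists N0 => m k hm hk.
  by rewrite hnorm_lt // hN.
exists l => eps eps0.
have e0 : 0 < toC (Num.sqrt eps) by rewrite ltcR sqrtr_gt0.
have [N0 hN] := hl _ e0; exists N0 => k hk.
by have := hN k hk; rewrite hnorm_lt //= sqr_sqrtr // ltW.
Qed.

Lemma projection_exists A x :
  exists p, orth A p /\ forall w, orth A w -> ip (x - p) w = 0.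
Proof.
have [w hw] := minimizing_seq A x.
have hcauchy : cauchy_seq w.
  move=> eps e0; have e4 : 0 < eps / 4 by rewrite divr_gt0.
  have [N0 hN] := inv_succ_small e4.
  exists N0 => m k hm hk.
  have := minimizers_close (hw m).1 (hw k).1 (hw m).2 (hw k).2.
  have := hN m hm; have := hN k hk.
  set a := m.+1%:R^-1; set b := k.+1%:R^-1; lra.
have [l hl] := cauchy_converges hcauchy.
have lA : orth A l := orth_closed (fun k => (hw k).1) hl.
exists l; split => //.
by apply: minimizer_orth => //; apply: limit_minimizes hl => k; exact: (hw k).2.
Qed.

Section Quasinormal.
Variables (Q Qs : V -> V) (n : nat).
Hypothesis Q_linear : linear Q.
Hypothesis Q_adj : forall x y, ip (Q x) y = ip x (Qs y).
Hypothesis Q_quasinormal : forall x, Q (Qs (Q x)) = Qs (Q (Q x)).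
Hypothesis n_gt1 : (1 < n)%N.

Lemma Qs_adj x y : ip (Qs x) y = ip x (Q y).
Proof. by rewrite ip_conj -Q_adj -ip_conj. Qed.

Lemma Qs_linear : linear Qs.
Proof. by move=> a x y; apply: ip_ext => w; rewrite -Q_adj !ipDr !ipZr !Q_adj. Qed.

Lemma iter_adj k x y : ip (iter k Q x) y = ip x (iter k Qs y).
Proof. by elim: k x y => [//|k IH] x y /=; rewrite Q_adj IH -iterSr. Qed.

Lemma iter_adj_Qs k x y : ip (iter k Qs x) y = ip x (iter k Q y).
Proof. by rewrite ip_conj -iter_adj -ip_conj. Qed.

Lemma iter_normal : (forall x, Qs (Q x) = Q (Qs x)) -> normal_op ip (iter n Q).
Proof.
move=> hc; exists (iter n Qs); split; first exact: iter_adj.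
by move=> x; apply: iter_comm.
Qed.

Lemma Qs_quasinormal x : Qs (Q (Qs x)) = Qs (Qs (Q x)).
Proof.
apply: ip_ext => w.
by rewrite -Q_adj -Qs_adj -Q_adj Q_quasinormal Qs_adj Q_adj Q_adj.
Qed.

Definition in_kerQs u := Qs u = 0.

Lemma kerQs_QsQ u : in_kerQs u -> in_kerQs (Qs (Q u)).
Proof.
rewrite /in_kerQs -Qs_quasinormal => ->.
by rewrite (lin0 Q_linear) (lin0 Qs_linear).
Qed.

Lemma Qs_iterQ u j : in_kerQs u -> Qs (iter j.+1 Q u) = iter j Q (Qs (Q u)).
Proof. by move=> hu; elim: j => [//|j IH] /=; rewrite -Q_quasinormal IH. Qed.

Lemma iterQs_iterQ k j u : in_kerQs u -> iter k Qs (iter j Q u) = 0 \/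
  (k <= j)%N /\ exists u', in_kerQs u' /\ iter k Qs (iter j Q u) = iter (j - k) Q u'.
Proof.
elim: k => [|k IH] hu; first by right; split => //; exists u; rewrite subn0.
case: (IH hu) => [h|[hk [u' [hu' h]]]] /=.
  by left; rewrite h (lin0 Qs_linear).
rewrite h; case Ejk: (j - k)%N => [|m]; first by left.
right; split; first by rewrite -subn_gt0 Ejk.
exists (Qs (Q u')); split; first exact: kerQs_QsQ.
by rewrite Qs_iterQ // subnS Ejk.
Qed.

(* The vectors Q^j u with u in ker Q* and j not a multiple of n; its orthogonal
   complement W reduces T = Q^n. *)
Definition shifted_kernel z :=
  exists j u, in_kerQs u /\ (j %% n != 0)%N /\ z = iter j Q u.

Lemma kerQs_orth u : in_kerQs u -> orth shifted_kernel u.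
Proof.
move=> hu z [[|j] [u' [hu' [hj ->]]]]; first by rewrite mod0n in hj.
by rewrite -iter_adj_Qs iterSr hu (lin0 (iter_linear Qs_linear _)) ip0l.
Qed.

Lemma Q_kerQs u : in_kerQs u -> shifted_kernel (Q u).
Proof. by move=> hu; exists 1%N, u; rewrite modn_small. Qed.

Lemma orth_T w : orth shifted_kernel w -> orth shifted_kernel (iter n Q w).
Proof.
move=> hw z [j [u [hu [hj ->]]]]; rewrite iter_adj.
case: (iterQs_iterQ n j hu) => [->|[hk [u' [hu' ->]]]]; first by rewrite ip0r.
by apply: hw; exists (j - n)%N, u'; rewrite -modnDr subnK.
Qed.

Lemma orth_Ts w : orth shifted_kernel w -> orth shifted_kernel (iter n Qs w).
Proof.
move=> hw z [j [u [hu [hj ->]]]]; rewrite iter_adj_Qs -iterD.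
by apply: hw; exists (n + j)%N, u; rewrite modnDl.
Qed.

(* A non-normal Q yields m in ker Q* with Q*Q m != 0: take m = [Q*, Q] x0. *)
Lemma non_normal_defect x0 : Qs (Q x0) != Q (Qs x0) ->
  exists m, in_kerQs m /\ Qs (Q m) != 0.
Proof.
move=> hx0; set m := Qs (Q x0) - Q (Qs x0).
have m_ker : in_kerQs m by rewrite /in_kerQs (linB Qs_linear) Qs_quasinormal subrr.
exists m; split => //; apply/eqP => hP.
have Qm0 : Q m = 0.
  by apply: ip_definite; rewrite -Qs_adj hP ip0l.
move: hx0; rewrite -subr_eq0 -/m => /eqP; apply; apply: ip_definite.
by rewrite {1}/m ipBl Qs_adj Qm0 ip0r Q_adj m_ker ip0r subrr.
Qed.

Section Perturbation.
Local Notation W := (orth shifted_kernel).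
Local Notation T := (iter n Q).

Variable Pi : V -> V.
Hypothesis Pi_W : forall x, W (Pi x).
Hypothesis Pi_orth : forall x, orth W (x - Pi x).

Lemma Pi_uniq a b : W a -> orth W b -> Pi (a + b) = a.
Proof.
move=> ha hb; apply/eqP; rewrite -subr_eq0; apply/eqP/ip_definite.
have dW : W (Pi (a + b) - a).
  by rewrite -scaleN1r addrC; apply: orth_lin.
have e : Pi (a + b) - a = b - (a + b - Pi (a + b)).
  by rewrite opprB (addrCA b) opprD (addrCA b) subrr addr0.
by rewrite {1}e ipBl (hb _ dW) (Pi_orth _ dW) subrr.
Qed.

Lemma Pi_id w : W w -> Pi w = w.
Proof. by move=> hw; have := Pi_uniq hw (@orth0 _); rewrite addr0. Qed.

Lemma Pi_orth_zero b : orth W b -> Pi b = 0.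
Proof. by move=> hb; have := Pi_uniq (@orth0 _) hb; rewrite add0r. Qed.

Lemma Pi_linear : linear Pi.
Proof.
move=> a x y.
have -> : a *: x + y = (a *: Pi x + Pi y) + (a *: (x - Pi x) + (y - Pi y)).
  by rewrite scalerBr addrACA (addrC (a *: Pi x)) subrK (addrC (Pi y)) subrK.
by rewrite Pi_uniq //; apply: orth_lin.
Qed.

(* W reduces T, so Pi commutes with T. *)
Lemma Pi_T x : Pi (T x) = T (Pi x).
Proof.
have -> : T x = T (Pi x) + T (x - Pi x).
  by rewrite -(linD (iter_linear Q_linear _)) addrC subrK.
rewrite Pi_uniq //; first exact/orth_T/Pi_W.
by move=> w hw; rewrite iter_adj; apply/Pi_orth/orth_Ts.
Qed.

Lemma Pi_ip_orth c x : ip (c *: Pi x) (x - Pi x) = 0.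
Proof. by rewrite ipZl ip_conj Pi_orth ?rmorph0 ?mulr0. Qed.

Lemma sqn_Pi x : sqn x = sqn (Pi x) + sqn (x - Pi x).
Proof.
rewrite -sqn_orth; first by rewrite addrC subrK.
by have := Pi_ip_orth 1 x; rewrite scale1r.
Qed.

Definition D x := x + Pi x.
Definition Dinv x := x - 2^-1 *: Pi x.

Lemma half (v : V) : 2^-1 *: v + 2^-1 *: v = v.
Proof. by rewrite -scalerDl (_ : 2^-1 + 2^-1 = 1 :> R[i]) ?scale1r //; field. Qed.

Lemma Dinv_D x : Dinv (D x) = x.
Proof.
by rewrite /Dinv /D (linD Pi_linear) (Pi_id (Pi_W x)) scalerDr half addrK.
Qed.

Lemma D_Dinv x : D (Dinv x) = x.
Proof.
rewrite /Dinv /D (linB Pi_linear) (linZ Pi_linear) (Pi_id (Pi_W x)).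
by rewrite -{2}(half (Pi x)) addrK subrK.
Qed.

Lemma D_linear : linear D.
Proof. by move=> a x y; rewrite /D Pi_linear scalerDr addrACA. Qed.

Lemma Dinv_linear : linear Dinv.
Proof.
move=> a x y; rewrite /Dinv Pi_linear scalerDr scalerBr scalerA mulrC -scalerA.
by rewrite opprD addrACA.
Qed.

Lemma sqn_D y : sqn y <= sqn (D y) /\ sqn (D y) <= 4 * sqn y.
Proof.
have -> : D y = (1 + 1 : R[i]) *: Pi y + (y - Pi y).
  by rewrite /D scalerDl scale1r addrACA subrr addr0 addrC.
rewrite sqn_orth ?Pi_ip_orth // sqn_scale /= (sqn_Pi y).
by have := sqn_ge0 (Pi y); have := sqn_ge0 (y - Pi y); split; lra.
Qed.

Lemma sqn_Dinv y : sqn (Dinv y) <= sqn y.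
Proof.
have -> : Dinv y = 2^-1 *: Pi y + (y - Pi y).
  by rewrite /Dinv -{3}(half (Pi y)) opprD (addrCA (2^-1 *: Pi y)) addNKr.
rewrite sqn_orth ?Pi_ip_orth // sqn_scale /= (sqn_Pi y).
rewrite [X in X * sqn (Pi y)](_ : _ = 4^-1); last by field.
by have := sqn_ge0 (Pi y); have := sqn_ge0 (y - Pi y); lra.
Qed.

Definition Rop x := D (Q (Dinv x)).

Lemma Rop_linear : linear Rop.
Proof. by move=> a x y; rewrite /Rop Dinv_linear Q_linear D_linear. Qed.

Lemma Rop_pow x : iter n Rop x = T x.
Proof.
have iter_Rop k y : iter k Rop y = D (iter k Q (Dinv y)).
  by elim: k => [|k IH] /=; rewrite ?D_Dinv // IH /Rop Dinv_D.
rewrite iter_Rop /Dinv (linB (iter_linear Q_linear _)).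
by rewrite (linZ (iter_linear Q_linear _)) -Pi_T -/(Dinv (T x)) D_Dinv.
Qed.

Lemma Rop_bounded (M : R[i]) : 0 <= M -> (forall x, hnorm ip (Q x) <= M * hnorm ip x) ->
  forall x, hnorm ip (Rop x) <= (2 * M) * hnorm ip x.
Proof.
move=> M0 hM x; rewrite hnorm_le ?mulr_ge0 ?ler0n //.
have -> : complex.Re (2 * M) = 2 * complex.Re M by case: (M) => a b /=; ring.
have hQ : sqn (Q (Dinv x)) <= complex.Re M ^+ 2 * sqn (Dinv x) by rewrite -hnorm_le.
have hDinv : complex.Re M ^+ 2 * sqn (Dinv x) <= complex.Re M ^+ 2 * sqn x.
  by rewrite ler_wpM2l ?sqr_ge0 ?sqn_Dinv.
have := (sqn_D (Q (Dinv x))).2; rewrite -/(Rop x) exprMn; lra.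
Qed.

Section Defect.
Variable m : V.
Hypothesis m_ker : in_kerQs m.
Hypothesis QsQm_neq0 : Qs (Q m) != 0.

(* Q m lies in the shifted kernel, hence is orthogonal to W. *)
Lemma Pi_Qm : Pi (Q m) = 0.
Proof.
by apply: Pi_orth_zero => w hw; rewrite ip_conj hw ?rmorph0 //; exact: Q_kerQs.
Qed.

Lemma Rop_m : Rop m = 2^-1 *: Q m.
Proof.
rewrite /Rop /Dinv (Pi_id (kerQs_orth m_ker)).
have -> : m - 2^-1 *: m = 2^-1 *: m by rewrite -[m in m - _]half addrK.
rewrite (linZ Q_linear).
by rewrite /D (linZ Pi_linear) Pi_Qm scaler0 addr0.
Qed.

Lemma Rop_Qm : Rop (Q m) = D (Q (Q m)).
Proof.
by rewrite /Rop /Dinv Pi_Qm scaler0 subr0.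
Qed.

Lemma conj_half : (2^-1 : R[i])^* = 2^-1.
Proof. by apply/eqP; rewrite eq_complex /= eqxx /= !add0r mul0r !oppr0. Qed.

Lemma Rop_adj_Qm S : is_adjoint ip Rop S -> S (Q m) = 2^-1 *: Qs (Q m).
Proof.
move=> hS; apply: ip_ext => w.
have PmW : W (Qs (Q m)) by apply/kerQs_orth/kerQs_QsQ.
have Pi_Pm : ip (Pi w) (Qs (Q m)) = ip w (Qs (Q m)).
  by have /eqP := Pi_orth w PmW; rewrite ipBl subr_eq0 => /eqP.
rewrite -hS /Rop /D ipDl (Pi_W _ (Q_kerQs m_ker)) addr0 Q_adj.
by rewrite /Dinv ipBl ipZl Pi_Pm ipZr conj_half; field.
Qed.

(* Testing R (R* R) m = (R* R) R m against Q m gives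
   |Q*Q m|^2 / 8 = |D Q^2 m|^2 / 2 >= |Q^2 m|^2 / 2 = |Q*Q m|^2 / 2. *)
Lemma Rop_not_quasinormal : ~ quasinormal_op ip Rop.
Proof.
move=> [S [hS hqn]].
set Pm := Qs (Q m).
have SRm : S (Rop m) = 2^-1 *: S (Q m).
  by apply: ip_ext => w; rewrite -hS Rop_m ipZr hS ipZr.
have sqn_QQm : sqn (Q (Q m)) = sqn Pm.
  by rewrite /sqn Q_adj -Q_quasinormal -Qs_adj.
have := congr1 (fun v => ip v (Q m)) (hqn m).
rewrite /= hS SRm (Rop_adj_Qm hS) [RHS]ip_conj -hS Rop_Qm Rop_m (linZ Rop_linear) Rop_Qm.
rewrite !ipZl !ipZr conj_half rmorphM /= conj_half -ip_conj !ip_sqn.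
have -> : (2^-1 : R[i]) = toC 2^-1.
  by apply/eqP; rewrite eq_complex /=; apply/andP; split; apply/eqP; field.
rewrite -!rmorphM => /complexI.
have Pm_pos : 0 < sqn Pm.
  by rewrite lt_def sqn_ge0 andbT; apply: contra QsQm_neq0 => /eqP/sqn_eq0/eqP.
have := (sqn_D (Q (Q m))).1; rewrite sqn_QQm; lra.
Qed.

End Defect.
End Perturbation.
End Quasinormal.

End InnerProductSpace.

Theorem theorem6p3 (R : realType) (V : lmodType R[i]) (ip : V -> V -> R[i])
  (T : V -> V) (n : nat) :
  is_hilbert ip ->
  bounded_op ip T -> quasinormal_op ip T -> ~ normal_op ip T ->
  (1 < n)%N ->
  (exists Q : V -> V, bounded_op ip Q /\ quasinormal_op ip Q /\
      forall x, iter n Q x = T x) ->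
  exists Rop : V -> V, bounded_op ip Rop /\ ~ quasinormal_op ip Rop /\
      forall x, iter n Rop x = T x.
Proof.
move=> [ip_lin ip_conj ip_ge0 ip_def ip_compl] _ _ T_not_normal n_gt1.
move=> [Q [[Q_lin [M [M0 Q_bdd]]] [[Qs [Q_adj Q_qn]] /funext QnT]]].
have [x0 /eqP Q_not_normal] : exists x0, ~ Qs (Q x0) = Q (Qs x0).
  apply/existsNP => Q_normal; apply: T_not_normal; rewrite -QnT.
  exact: iter_normal Q_adj Q_normal.
have [m [m_ker Pm_neq0]] := non_normal_defect ip_lin ip_conj ip_def Q_adj Q_qn Q_not_normal.
have [Pi Pi_proj] := boolp.choice
  (projection_exists ip_lin ip_conj ip_ge0 ip_def ip_compl (shifted_kernel Q Qs n)).
have Pi_W x := (Pi_proj x).1; have Pi_orth x := (Pi_proj x).2.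
exists (Rop Q Pi); split; [split|split].
- exact: (Rop_linear ip_lin ip_def Q_lin Pi_W Pi_orth).
- exists (2 * M); split; first by rewrite mulr_ge0 ?ler0n.
  exact: (Rop_bounded ip_lin ip_conj ip_ge0 Pi_W Pi_orth M0 Q_bdd).
- exact: (Rop_not_quasinormal ip_lin ip_conj ip_ge0 ip_def Q_lin Q_adj Q_qn n_gt1
           Pi_W Pi_orth m_ker Pm_neq0).
- by move=> x; rewrite -QnT; apply: (Rop_pow ip_lin ip_conj ip_def Q_lin Q_adj Q_qn Pi_W Pi_orth).
Qed.
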